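(* Let $\varphi$ be a hexagonal grid whose reference triangle $T=(A,B,C)$ is nondegenerate, counterclockwise and not equilateral. Let $a=|BC|$, $b=|CA|$, $c=|AB|$, and let $S$ be twice the area of $T$. Let $f_a,f_b,f_c$ be the common foci of the parabolas through the vertex sequences of the $A$-, $B$-, $C$-chains, respectively. Then: 1. $f_a,f_b,f_c$ are the vertices of an equilateral triangle whose centroid is the second isodynamic point $X_{16}(T)$. 2. In homogeneous barycentric coordinates with respect to $ABC$, $f_a=(x:y:z)$ with $$x=\sqrt3\,(7a^2b^2+7a^2c^2+2b^2c^2-4a^4-b^4-c^4)-2S(8a^2+b^2+c^2),$$ $$y=\sqrt3\,(2a^2b^2-a^2c^2+3b^2c^2-4b^4+c^4)+2S(2a^2-2b^2-c^2),$$ $$z=-\sqrt3\,(a^2b^2-2a^2c^2-3b^2c^2-b^4+4c^4)+2S(2a^2-b^2-2c^2).$$ 3. The side length $s$ of the triangle $f_af_bf_c$ satisfies $$s^2=\tfrac{3}{32}\left(a^2+b^2+c^2-2\sqrt3\,S\right)=\tfrac{3}{16}(\cot\omega-\sqrt3)\,S,$$ where $\omega$ is the Brocard angle of $T$.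
   Context: Let $\zeta=e^{i\pi/3}$ and $\Lambda=\{m+n\zeta: m,n\in\mathbb{Z}\}$. Call $p,q\in\Lambda$ adjacent if $|p-q|=1$, and let $\mathcal{E}$ be the set of unordered pairs $\{p,q\}$ of adjacent lattice points. A hexagonal grid is a map $\varphi:\mathcal{E}\to\mathbb{C}$ such that for every $p\in\Lambda$ there exist $c_p,r_p\in\mathbb{C}$ with $\varphi(\{p,p+\zeta^k\})=c_p+r_p\zeta^k$ for $k=0,\dots,5$. Thus the six points form a regular, possibly degenerate, hexagon $H_p$ listed counterclockwise. For each set $\{p,q,s\}\subset\Lambda$ of three pairwise adjacent lattice points listed counterclockwise, the corresponding triangle of the grid is $(\varphi(\{p,q\}),\varphi(\{q,s\}),\varphi(\{s,p\}))$. The reference triangle of $\varphi$ is $(\varphi(\{0,1\}),\varphi(\{1,\zeta\}),\varphi(\{\zeta,0\}))$. Chains. For $p\in\Lambda$ and a direction $e\in\{1,\zeta,\zeta^2\}$, the chain of hexagons $(H_{p+ke})_{k\in\mathbb{Z}}$ has consecutive hexagons sharing the vertex $U_k=\varphi(\{p+ke,p+(k+1)e\})$. The points $U_{k-1}$ and $U_k$ are antipodal vertices of $H_{p+ke}$; $(U_k)_{k\in\mathbb{Z}}$ is the vertex sequence of the chain. Chains of direction $1$, $\zeta^2$, $\zeta$ are called $A$-, $B$-, $C$-chains, respectively. Note that $A=\varphi(\{0,1\})$, $B=\varphi(\{1,1+\zeta^2\})$ and $C=\varphi(\{0,\zeta\})$. Standing fact (proved in the paper): the vertex sequence of each chain lies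 on a parabola, and parabolas from chains with the same direction share a focus. The Brocard angle $\omega$ of $T$ is defined by $\cot\omega=(a^2+b^2+c^2)/(2S)$. For a nondegenerate triangle with vertices $V_1,V_2,V_3$, let $\ell_i$ be the length of the side opposite $V_i$ and $\theta_i$ the angle at $V_i$. Its second isodynamic point $X_{16}$ has homogeneous barycentric coordinates $(\ell_1\sin(\theta_1-\pi/3):\ell_2\sin(\theta_2-\pi/3):\ell_3\sin(\theta_3-\pi/3))$. *)

From mathcomp Require Import all_boot all_order all_algebra.
From mathcomp Require Import all_classical all_reals all_analysis.
From mathcomp Require Export complex.
Set Implicit Arguments. Unset Strict Implicit. Unset Printing Implicit Defensive.
Import Order.TTheory GRing.Theory Num.Theory.
Local Open Scope ring_scope.
Local Open Scope complex_scope.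

Section Defs.
Variable R : realType.

Definition cre (z : R[i]) : R := complex.Re z.
Definition cim (z : R[i]) : R := complex.Im z.
Definition cnorm (z : R[i]) : R := Num.sqrt (cre z ^+ 2 + cim z ^+ 2).
Definition rC (x : R) : R[i] := Complex x 0.

Definition zeta : R[i] := Complex (1 / 2) (Num.sqrt 3 / 2).

(* lattice points m + n zeta are coded by the pair (m, n) *)
Definition lat := (int * int)%type.
Definition latC (p : lat) : R[i] := rC (p.1)%:~R + rC (p.2)%:~R * zeta.
Definition ladd (p q : lat) : lat := (p.1 + q.1, p.2 + q.2).
Definition lscale (k : int) (p : lat) : lat := (k * p.1, k * p.2).

(* zeta^k as lattice point, k = 0..5:
   1 = (1,0), zeta = (0,1), zeta^2 = zeta - 1 = (-1,1), zeta^3 = -1 = (-1,0),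
   zeta^4 = -zeta = (0,-1), zeta^5 = 1 - zeta = (1,-1) *)
Definition dir (k : 'I_6) : lat :=
  match val k with
  | 0 => (1, 0) | 1 => (0, 1) | 2 => (-1, 1)
  | 3 => (-1, 0) | 4 => (0, -1) | _ => (1, -1)
  end.

Definition adjacent (p q : lat) : Prop := cnorm (latC p - latC q) = 1.

(* A map on unordered edges {p,q} is coded as a function on ordered pairs,
   required to be symmetric on adjacent pairs; values on non-adjacent pairs
   are irrelevant. *)
Definition hex_grid (phi : lat -> lat -> R[i]) : Prop :=
  (forall p q, adjacent p q -> phi p q = phi q p) /\
  (forall p, exists c r : R[i], forall k : 'I_6,
      phi p (ladd p (dir k)) = c + r * zeta ^+ k).

Definition chain_vertex (phi : lat -> lat -> R[i]) (p e : lat) (k : int) : R[i] :=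
  phi (ladd p (lscale k e)) (ladd p (lscale (k + 1) e)).

Definition dirA : lat := (1, 0).
Definition dirB : lat := (-1, 1).
Definition dirC : lat := (0, 1).

(* distance from z to the line through d with direction u (u != 0) *)
Definition dist_line (z d u : R[i]) : R := `| cim ((z - d) * u^*) | / cnorm u.

(* the sequence U lies on a parabola with focus f (and some directrix
   not passing through f) *)
Definition on_parabola_with_focus (f : R[i]) (U : int -> R[i]) : Prop :=
  exists d u : R[i], u != 0 /\ dist_line f d u != 0 /\
    forall k, cnorm (U k - f) = dist_line (U k) d u.

Definition refA (phi : lat -> lat -> R[i]) : R[i] := phi (0, 0) (1, 0).
Definition refB (phi : lat -> lat -> R[i]) : R[i] := phi (1, 0) (0, 1).
Definition refC (phi : lat -> lat -> R[i]) : R[i] := phi (0, 1) (0, 0).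

(* twice the signed area; > 0 iff nondegenerate and counterclockwise *)
Definition sarea2 (A B C : R[i]) : R := cim ((B - A)^* * (C - A)).

Definition dotc (z w : R[i]) : R := cre (z * w^*).
Definition angle_at (V P Q : R[i]) : R :=
  acos (dotc (P - V) (Q - V) / (cnorm (P - V) * cnorm (Q - V))).

Definition is_bary (P : R[i]) (x y z : R) (A B C : R[i]) : Prop :=
  x + y + z != 0 /\ P * rC (x + y + z) = rC x * A + rC y * B + rC z * C.

Definition isX16 (P A B C : R[i]) : Prop :=
  is_bary P (cnorm (B - C) * sin (angle_at A B C - pi / 3))
            (cnorm (C - A) * sin (angle_at B C A - pi / 3))
            (cnorm (A - B) * sin (angle_at C A B - pi / 3)) A B C.

(* Brocard angle: the omega in (0, pi/2) with cot omega = (a^2+b^2+c^2)/(2S) *)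
Definition cot (x : R) : R := cos x / sin x.
Definition brocard (A B C : R[i]) : R :=
  atan (2 * sarea2 A B C /
        (cnorm (B - C) ^+ 2 + cnorm (C - A) ^+ 2 + cnorm (A - B) ^+ 2)).

End Defs.

From Pilot Require Import Defs.
From mathcomp Require Import all_boot all_order all_algebra.
From mathcomp Require Import all_classical all_reals all_analysis.
From mathcomp Require Import complex.
From mathcomp Require Import ring lra.
Set Implicit Arguments. Unset Strict Implicit. Unset Printing Implicit Defensive.
Import Order.TTheory GRing.Theory Num.Theory.
Local Open Scope ring_scope.
Local Open Scope complex_scope.

(* A hexagonal grid is the restriction to the edges of the triangular lattice of
   a symmetric quadratic form: phi {p, q} = g + al (p + q) + be p q.  Indeed a
   hexagon c + r z^k is determined by two of its vertices, and every vertex is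
   shared by two hexagons, so such a form, once fitted to two adjacent hexagons,
   propagates to the whole lattice.  Along a chain of direction w the vertices
   U_k = g + al w (2k + 1) + be w^2 k (k + 1) are quadratic in k, so their
   parabola has focus g - al^2/be - be w^2/4.  For w = 1, z^2, z the last term
   runs through be/4 times the cube roots of unity, which makes the foci an
   equilateral triangle centred at g - al^2/be.  The reference triangle is
   g + al, g + al (1 + z) + be z, g + al z, and be <> 0 exactly because it is
   not equilateral; what remains are polynomial identities in g, al, be. *)

Local Notation ord6 k := (@Ordinal 6 k isT).

Section HexagonalGrid.
Variable R : realType.
Local Notation C := R[i].
Local Notation z := (zeta R).
Local Notation sqrt3 := (Num.sqrt (3 : R)).

Lemma sqrt3_sqr : sqrt3 ^+ 2 = 3.
Proof. by rewrite sqr_sqrtr. Qed.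

Lemma sqrt3_gt0 : 0 < sqrt3.
Proof. by rewrite sqrtr_gt0. Qed.

(** * Complex numbers and the lattice *)

Lemma complex_ext (x y : C) : cre x = cre y -> cim x = cim y -> x = y.
Proof. by case: x => ? ?; case: y => ? ? /= -> ->. Qed.

Lemma cnorm_sqr (x : C) : cnorm x ^+ 2 = cre x ^+ 2 + cim x ^+ 2.
Proof. by rewrite /cnorm sqr_sqrtr // addr_ge0 ?sqr_ge0. Qed.

Lemma cnorm_ge0 (x : C) : 0 <= cnorm x.
Proof. exact: sqrtr_ge0. Qed.

Lemma cnorm_gt0 (x : C) : x != 0 -> 0 < cnorm x.
Proof.
case: x => x1 x2 nz; rewrite sqrtr_gt0 /cre /cim /= lt_neqAle addr_ge0 ?sqr_ge0 // andbT.
rewrite eq_sym paddr_eq0 ?sqr_ge0 // !sqrf_eq0.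
by apply: contra nz => /andP[/eqP-> /eqP->].
Qed.

Lemma cnorm0 : cnorm (0 : C) = 0.
Proof. by rewrite /cnorm /cre /cim /= expr0n addr0 sqrtr0. Qed.

Lemma cnorm_sqr_gt0 (x : C) : x != 0 -> 0 < cnorm x ^+ 2.
Proof. by move/cnorm_gt0/exprn_gt0. Qed.

Lemma cnorm_distC (x y : C) : cnorm (x - y) = cnorm (y - x).
Proof. by rewrite /cnorm /cre /cim -opprB; case: (y - x) => ? ? /=; rewrite !sqrrN. Qed.

Lemma eq_cnorm (x y : C) : cnorm x ^+ 2 = cnorm y ^+ 2 -> cnorm x = cnorm y.
Proof. by move/eqP; rewrite eqrXn2 ?cnorm_ge0 // => /eqP. Qed.

Lemma cnorm_pow4 (x : C) : cnorm x ^+ 4 = (cre x ^+ 2 + cim x ^+ 2) ^+ 2.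
Proof. by rewrite -cnorm_sqr -exprM. Qed.

Lemma rC_mul (x y : R) : rC (x * y) = rC x * rC y.
Proof. by apply: complex_ext; rewrite /rC /=; ring. Qed.

Lemma zeta_sqr : z ^+ 2 = z - 1.
Proof. by apply: complex_ext; rewrite /zeta /=; field: sqrt3_sqr. Qed.

Lemma zeta3 : z ^+ 3 = -1.
Proof. by rewrite exprS zeta_sqr; apply: complex_ext; rewrite /zeta /=; field: sqrt3_sqr. Qed.

Lemma zeta4 : z ^+ 4 = - z.
Proof. by rewrite exprS zeta3 mulrN1. Qed.

Lemma zeta5 : z ^+ 5 = 1 - z.
Proof. by rewrite exprS zeta4 mulrN -expr2 zeta_sqr opprB. Qed.

Lemma zeta_neq0 : z != 0.
Proof.
apply/eqP => /(congr1 (@complex.Re R)) /= /eqP.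
by rewrite mulf_eq0 invr_eq0 !pnatr_eq0 oner_eq0.
Qed.

Lemma latCE p : latC R p = p.1%:~R + p.2%:~R * z.
Proof. by rewrite /latC /rC !complexr0 !rmorph_int. Qed.

Lemma latC_add p q : latC R (ladd p q) = latC R p + latC R q.
Proof. rewrite !latCE /ladd /= !intrD; ring. Qed.

Lemma latC_scale k p : latC R (lscale k p) = k%:~R * latC R p.
Proof. rewrite !latCE /lscale /= !intrM; ring. Qed.

Lemma latC0 : latC R (0, 0) = 0.
Proof. by rewrite latCE /= mul0r addr0. Qed.

Lemma latC_dir k : latC R (dir k) = z ^+ k.
Proof.
case: k => [[|[|[|[|[|[|//]]]]]] ?]; rewrite latCE /dir /=.
- by rewrite expr0; ring.
- by rewrite expr1; ring.
- by rewrite zeta_sqr; ring.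
- by rewrite zeta3; ring.
- by rewrite zeta4; ring.
- by rewrite zeta5; ring.
Qed.

Lemma latC_inj : injective (latC R).
Proof.
move=> [p1 p2] [q1 q2] /[dup] /(congr1 (@complex.Im R)) EIm /(congr1 (@complex.Re R)) ERe.
move: EIm ERe; rewrite /latC /rC /zeta /= => EIm ERe.
have E2 : p2%:~R = q2%:~R :> R.
  apply: (mulIf (lt0r_neq0 sqrt3_gt0)); lra.
have E1 : p1%:~R = q1%:~R :> R by lra.
by rewrite (intr_inj E1) (intr_inj E2).
Qed.

Lemma dir_inj : injective dir.
Proof.
by move=> [[|[|[|[|[|[|//]]]]]] ?] [[|[|[|[|[|[|//]]]]]] ?] /eqP //= _; apply: val_inj.
Qed.

Lemma zeta_exp_neq (k1 k2 : 'I_6) : k1 != k2 -> z ^+ k1 != z ^+ k2.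
Proof. by apply: contraNneq; rewrite -!latC_dir => /latC_inj /dir_inj ->. Qed.

Lemma adjacent_dir p k : Defs.adjacent R p (ladd p (dir k)).
Proof.
rewrite /Defs.adjacent latC_add latC_dir opprD addrA subrr add0r /cnorm -sqrtr1.
congr Num.sqrt; case: k => [[|[|[|[|[|[|//]]]]]] ?] /=;
  rewrite ?expr0 ?expr1 ?zeta_sqr ?zeta3 ?zeta4 ?zeta5 /cre /cim /zeta /=; by field: sqrt3_sqr.
Qed.

Lemma laddr0 : right_id (0, 0) ladd.
Proof. by move=> [p1 p2]; rewrite /ladd /= !addr0. Qed.

Lemma laddA : associative ladd.
Proof. by move=> p q r; rewrite /ladd /= !addrA. Qed.

Lemma dir_opp k : exists k', ladd (dir k) (dir k') = (0, 0).
Proof.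
case: k => [[|[|[|[|[|[|//]]]]]] ?].
- by exists (ord6 3).
- by exists (ord6 4).
- by exists (ord6 5).
- by exists (ord6 0).
- by exists (ord6 1).
- by exists (ord6 2).
Qed.

(** * The quadratic form of a hexagonal grid *)

Definition edge_model (g al be : C) (p q : lat) : C :=
  g + al * (latC R p + latC R q) + be * latC R p * latC R q.

Definition model_fits_at phi g al be (p : lat) :=
  forall k, phi p (ladd p (dir k)) = edge_model g al be p (ladd p (dir k)).

Lemma lat_ind (P : lat -> Prop) : P (0, 0) ->
  (forall p, P p -> P (ladd p (1, 0)) /\ P (ladd p (-1, 0))) ->
  (forall p, P p -> P (ladd p (0, 1)) /\ P (ladd p (0, -1))) ->
  forall p, P p.
Proof.
move=> P0 stepA stepC.
have along e : (forall p, P p -> P (ladd p e) /\ P (ladd p (lscale (-1) e))) ->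
    forall p k, P p -> P (ladd p (lscale k e)).
  move=> step p k Pp; elim/int_rec: k => [|n IH|n IH].
  - by rewrite /lscale !mul0r laddr0.
  - have -> : ladd p (lscale n.+1 e) = ladd (ladd p (lscale n e)) e.
      by rewrite /ladd /lscale /= intS; congr pair; ring.
    exact: (step _ IH).1.
  - have -> : ladd p (lscale (- n.+1%:Z) e) = ladd (ladd p (lscale (- n%:Z) e)) (lscale (-1) e).
      by rewrite /ladd /lscale /= intS; congr pair; ring.
    exact: (step _ IH).2.
move=> [m n].
have -> : (m, n) = ladd (ladd (0, 0) (lscale m (1, 0))) (lscale n (0, 1)).
  by rewrite /ladd /lscale /=; congr pair; ring.
by apply: (along _ stepC); apply: (along _ stepA).
Qed.

Section ModelPropagation.
Variable phi : lat -> lat -> C.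
Hypothesis grid : hex_grid phi.

(* The hexagon c + r z^k at s is pinned down by two of its vertices, each of
   which is also a vertex of the hexagon at a neighbour. *)
Lemma model_fits_of_neighbours g al be s k1 k2 : k1 != k2 ->
  model_fits_at phi g al be (ladd s (dir k1)) ->
  model_fits_at phi g al be (ladd s (dir k2)) -> model_fits_at phi g al be s.
Proof.
case: grid => sym hex neq fits1 fits2; have [c [r hexs]] := hex s.
have vertex k : model_fits_at phi g al be (ladd s (dir k)) ->
    c + r * z ^+ k = edge_model g al be s (ladd s (dir k)).
  move=> fitsk; have [k' opp] := dir_opp k.
  have back : ladd (ladd s (dir k)) (dir k') = s by rewrite -laddA opp laddr0.
  rewrite -hexs sym; last exact: adjacent_dir.
  by rewrite -[X in phi _ X]back fitsk back /edge_model; ring.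
have := vertex _ fits1; have := vertex _ fits2.
rewrite /edge_model !latC_add !latC_dir; set x := latC R s => E2 E1.
have Er : r = al + be * x.
  have : (r - (al + be * x)) * (z ^+ k1 - z ^+ k2) = 0.
    have -> : (r - (al + be * x)) * (z ^+ k1 - z ^+ k2) =
      c + r * z ^+ k1 - (c + r * z ^+ k2) - (al + be * x) * (z ^+ k1 - z ^+ k2) by ring.
    by rewrite E1 E2; ring.
  by move/eqP; rewrite mulf_eq0 !subr_eq0 (negPf (zeta_exp_neq neq)) orbF => /eqP.
have Ec : c = g + 2 * al * x + be * x ^+ 2.
  by apply: (@addIr _ (r * z ^+ k1)); rewrite E1 Er; ring.
by move=> k; rewrite hexs /edge_model latC_add latC_dir -/x Er Ec; ring.
Qed.

(* The side condition is closed by computation ([isT]) for explicit lattice vectors. *)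
Lemma model_fits_from g al be p v w1 w2 k1 k2 :
  model_fits_at phi g al be (ladd p w1) -> model_fits_at phi g al be (ladd p w2) ->
  [&& k1 != k2, ladd v (dir k1) == w1 & ladd v (dir k2) == w2] ->
  model_fits_at phi g al be (ladd p v).
Proof.
move=> fits1 fits2 /and3P[neq /eqP e1 /eqP e2].
by apply: (model_fits_of_neighbours neq); rewrite -laddA ?e1 ?e2.
Qed.

Lemma model_fits_origin : exists g al be,
  model_fits_at phi g al be (0, 0) /\ model_fits_at phi g al be (1, 0).
Proof.
case: grid => sym hex.
have [c0 [r0 hex0]] := hex (0, 0); have [c1 [r1 hex1]] := hex (1, 0).
have E : c1 = c0 + r0 + r1.
  have := sym (0, 0) (1, 0) (adjacent_dir (0, 0) (ord6 0)).
  rewrite [LHS](hex0 (ord6 0)) [RHS](hex1 (ord6 3)) /= zeta3 expr0 => e.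
  have -> : c1 = c1 + r1 * -1 + r1 by ring.
  by rewrite -e; ring.
exists c0, r0, (r1 - r0); split => k.
- by rewrite hex0 /edge_model latC_add latC_dir latC0; ring.
- rewrite hex1 /edge_model latC_add latC_dir E (_ : latC R (1, 0) = 1); first ring.
  by rewrite latCE /= mul0r addr0.
Qed.

Lemma hex_grid_model : exists g al be, forall p, model_fits_at phi g al be p.
Proof.
have [g [al [be [fits0 fits1]]]] := model_fits_origin.
pose pair p := model_fits_at phi g al be (ladd p (0, 0)) /\
               model_fits_at phi g al be (ladd p (1, 0)).
suff all_pairs : forall p, pair p.
  by exists g, al, be => p; have [] := all_pairs p; rewrite laddr0.
apply: lat_ind => [|p [f00 f10]|p [f00 f10]]; first by rewrite /pair laddr0.
all: rewrite /pair -!laddA /=.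
- have f1m := model_fits_from (v := (1, -1)) (k1 := ord6 1) (k2 := ord6 2) f10 f00 isT.
  have f2m := model_fits_from (v := (2, -1)) (k1 := ord6 2) (k2 := ord6 3) f10 f1m isT.
  have f0m := model_fits_from (v := (0, -1)) (k1 := ord6 0) (k2 := ord6 1) f1m f00 isT.
  have fm0 := model_fits_from (v := (-1, 0)) (k1 := ord6 0) (k2 := ord6 5) f00 f0m isT.
  have f20 := model_fits_from (v := (2, 0)) (k1 := ord6 3) (k2 := ord6 4) f10 f2m isT.
  by split; split.
- have f01 := model_fits_from (v := (0, 1)) (k1 := ord6 4) (k2 := ord6 5) f00 f10 isT.
  have f11 := model_fits_from (v := (1, 1)) (k1 := ord6 3) (k2 := ord6 4) f01 f10 isT.
  have f1m := model_fits_from (v := (1, -1)) (k1 := ord6 1) (k2 := ord6 2) f10 f00 isT.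
  have f0m := model_fits_from (v := (0, -1)) (k1 := ord6 0) (k2 := ord6 1) f1m f00 isT.
  by split; split.
Qed.

End ModelPropagation.

(** * Foci of the chains *)

Lemma chain_vertex_quadratic phi g al be (j : 'I_6) :
  (forall p, model_fits_at phi g al be p) ->
  let w := z ^+ j in
  chain_vertex phi (0, 0) (dir j) =
    fun k => g + al * w + (2 * al * w + be * w ^+ 2) * k%:~R + be * w ^+ 2 * k%:~R ^+ 2.
Proof.
move=> fits w; apply: funext => k; rewrite /chain_vertex.
set q := ladd (0, 0) (lscale k (dir j)).
have -> : ladd (0, 0) (lscale (k + 1) (dir j)) = ladd q (dir j).
  by rewrite /q /ladd /lscale /=; congr pair; ring.
rewrite fits /edge_model latC_add /q latC_add latC_scale latC0 latC_dir -/w; ring.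
Qed.

Lemma quartic_eq0 (e0 e1 e2 e3 e4 : R) :
  (forall n : nat, (n <= 4)%N ->
     e0 + e1 * n%:R + e2 * n%:R ^+ 2 + e3 * n%:R ^+ 3 + e4 * n%:R ^+ 4 = 0) ->
  [/\ e0 = 0, e1 = 0, e2 = 0, e3 = 0 & e4 = 0].
Proof.
move=> vanish; have := vanish 0%N isT; have := vanish 1%N isT; have := vanish 2%N isT.
have := vanish 3%N isT; have := vanish 4%N isT => /= *.
split; lra.
Qed.

Lemma focus_directrix_frame (w f d u : C) : u != 0 ->
  cnorm (w - f) = dist_line w d u ->
  let k := cim ((f - d) * u^*) in
  cre ((w - f) * u^*) ^+ 2 = 2 * k * cim ((w - f) * u^*) + k ^+ 2.
Proof.
move=> nz_u E k; rewrite /dist_line in E.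
have nu := cnorm_gt0 nz_u.
have {E} : cnorm (w - f) ^+ 2 * cnorm u ^+ 2 = cim ((w - d) * u^*) ^+ 2.
  by rewrite E expr_div_n real_normK ?num_real // divfK // sqrf_eq0 gt_eqF.
rewrite !cnorm_sqr /k; move: w f d u {nz_u nu k} => [w1 w2] [f1 f2] [d1 d2] [u1 u2].
rewrite /cre /cim /= => E; lra.
Qed.

Lemma focus_of_frame_points (A B F : C) (k : R) : k != 0 ->
  (forall n : nat, (n <= 4)%N -> let t : R := n%:R in
     (cre F + t * cre B + t ^+ 2 * cre A) ^+ 2 =
     2 * k * (cim F + t * cim B + t ^+ 2 * cim A) + k ^+ 2) ->
  4 * A * F = B ^+ 2.
Proof.
move=> nz_k on_parabola.
pose c0 := cre F ^+ 2 - 2 * k * cim F - k ^+ 2.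
pose c1 := 2 * cre F * cre B - 2 * k * cim B.
pose c2 := cre B ^+ 2 + 2 * cre F * cre A - 2 * k * cim A.
have [e0 e1 e2 _ e4] : [/\ c0 = 0, c1 = 0, c2 = 0, 2 * cre B * cre A = 0 & cre A ^+ 2 = 0].
  apply: quartic_eq0 => n /on_parabola /= E.
  transitivity ((cre F + n%:R * cre B + n%:R ^+ 2 * cre A) ^+ 2 -
     (2 * k * (cim F + n%:R * cim B + n%:R ^+ 2 * cim A) + k ^+ 2)).
    by rewrite /c0 /c1 /c2; ring.
  by rewrite E subrr.
move: e4 => /eqP; rewrite sqrf_eq0 => /eqP reA.
move: e0 e1 e2; rewrite /c0 /c1 /c2 => e0 e1 e2; clear on_parabola c0 c1 c2.
move: A B F reA e0 e1 e2 => [a1 a2] [b1 b2] [f1 f2]; rewrite /cre /cim /= => -> e0 e1 e2.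
have nz_2k : 2 * k != 0 by rewrite mulf_neq0 ?pnatr_eq0.
have a2E : a2 = b1 ^+ 2 / (2 * k).
  by apply: (mulIf nz_2k); rewrite divfK //; lra.
have b2E : b2 = f1 * b1 / k.
  by apply: (mulIf nz_k); rewrite divfK //; lra.
have f2E : f2 = (f1 ^+ 2 - k ^+ 2) / (2 * k).
  by apply: (mulIf nz_2k); rewrite divfK //; lra.
by apply: complex_ext; rewrite /= a2E b2E f2E; field.
Qed.

Lemma cre_poly2 (F B A : C) (t : R) :
  cre (F + t%:C * B + t%:C ^+ 2 * A) = cre F + t * cre B + t ^+ 2 * cre A.
Proof. by case: F B A => [? ?] [? ?] [? ?]; rewrite /cre /= expr2 /=; ring. Qed.

Lemma cim_poly2 (F B A : C) (t : R) :
  cim (F + t%:C * B + t%:C ^+ 2 * A) = cim F + t * cim B + t ^+ 2 * cim A.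
Proof. by case: F B A => [? ?] [? ?] [? ?]; rewrite /cim /= expr2 /=; ring. Qed.

Lemma parabola_focus (a b c f : C) :
  on_parabola_with_focus f (fun k : int => c + b * k%:~R + a * k%:~R ^+ 2) ->
  4 * a * (c - f) = b ^+ 2.
Proof.
move=> [d [u [nz_u [nz_dist on_par]]]].
set k := cim ((f - d) * u^*).
have nz_k : k != 0.
  by apply: contra nz_dist; rewrite /dist_line -/k => /eqP ->; rewrite normr0 mul0r.
have frame : 4 * (a * u^*) * ((c - f) * u^*) = (b * u^*) ^+ 2.
  apply: (focus_of_frame_points nz_k) => n _ t.
  have := focus_directrix_frame nz_u (on_par n); rewrite -/k.
  have -> : (c + b * (n%:Z)%:~R + a * (n%:Z)%:~R ^+ 2 - f) * u^* =
      (c - f) * u^* + t%:C * (b * u^*) + t%:C ^+ 2 * (a * u^*).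
    by rewrite /t rmorph_nat; ring.
  by rewrite cre_poly2 cim_poly2.
have nz_uc : u^* ^+ 2 != 0 by rewrite expf_neq0 // conjc_eq0.
apply: (mulIf nz_uc); transitivity (4 * (a * u^*) * ((c - f) * u^*)); first ring.
by rewrite frame; ring.
Qed.

Definition model_focus (g al be w : C) : C := g - al ^+ 2 / be - be * w ^+ 2 / 4.

Lemma chain_focus phi g al be (j : 'I_6) f : be != 0 ->
  (forall p, model_fits_at phi g al be p) ->
  on_parabola_with_focus f (chain_vertex phi (0, 0) (dir j)) ->
  f = model_focus g al be (z ^+ j).
Proof.
move=> nz_be fits; rewrite (chain_vertex_quadratic _ fits) => /parabola_focus focus.
rewrite /model_focus; have -> : f = g + al * z ^+ j -
    4 * (be * (z ^+ j) ^+ 2) * (g + al * z ^+ j - f) / (4 * (be * (z ^+ j) ^+ 2)).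
  by field; rewrite nz_be expf_neq0 ?zeta_neq0.
by rewrite focus; field; rewrite nz_be expf_neq0 ?zeta_neq0.
Qed.

(** * Triangle centres *)

Lemma cos_pi3 : cos (pi / 3 : R) = 1 / 2.
Proof.
set t := pi / 3 : R; set c := cos t.
have triple : cos pi = 4 * c ^+ 3 - 3 * c.
  have -> : pi = t + t + t by rewrite /t; field.
  by have h := sin2cos2 t; rewrite !cosD !sinD -/c; rewrite -/c in h; ring: h.
have c_gt0 : 0 < c.
  by apply: cos_gt0_pihalf; have := @pi_gt0 R; rewrite /t => ?; apply/andP; split; lra.
have : (c + 1) * (2 * c - 1) ^+ 2 = cos pi + 1 by rewrite triple; ring.
rewrite cospi addNr; move/eqP; rewrite mulf_eq0 sqrf_eq0 gt_eqF /=; last lra.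
by rewrite subr_eq0 => /eqP; lra.
Qed.

Lemma sin_pi3 : sin (pi / 3 : R) = sqrt3 / 2.
Proof.
have s_gt0 : 0 < sin (pi / 3 : R).
  by apply: sin_gt0_pi; have := @pi_gt0 R => ?; apply/andP; split; lra.
have := sin2cos2 (pi / 3 : R); rewrite cos_pi3 => sq.
apply/eqP; rewrite -(@eqrXn2 _ 2) ?ltW ?divr_ge0 ?sqrtr_ge0 //.
by rewrite expr_div_n sqrt3_sqr; apply/eqP; lra.
Qed.

Lemma cot_atan (x : R) : 0 < x -> cot (atan x) = x^-1.
Proof.
move=> x_gt0; have c_gt0 : 0 < cos (atan x) by rewrite cos_atan invr_gt0 sqrtr_gt0; nra.
have := atanK x; rewrite /tan /cot => tanE.
by rewrite -[in RHS]tanE invf_div.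
Qed.

Lemma sarea2_cycle (A B C : C) : sarea2 B C A = sarea2 A B C.
Proof. by case: A B C => [? ?] [? ?] [? ?]; rewrite /sarea2 /cim /=; ring. Qed.

Lemma lagrange_identity (u w : C) :
  dotc u w ^+ 2 + cim (u^* * w) ^+ 2 = cnorm u ^+ 2 * cnorm w ^+ 2.
Proof. by rewrite !cnorm_sqr; case: u w => [? ?] [? ?]; rewrite /dotc /cre /cim /=; ring. Qed.

Lemma cnorm_gt0_of_sarea (A B C : C) : 0 < sarea2 A B C ->
  0 < cnorm (B - A) /\ 0 < cnorm (C - A).
Proof.
move=> S_gt0; have lag := lagrange_identity (B - A) (C - A).
have prod_gt0 : 0 < cnorm (B - A) ^+ 2 * cnorm (C - A) ^+ 2.
  by rewrite -lag; have := sqr_ge0 (dotc (B - A) (C - A)); rewrite -/(sarea2 A B C); nra.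
split; rewrite lt_neqAle cnorm_ge0 andbT; apply: contraTneq prod_gt0 => <-.
  by rewrite expr0n mul0r ltxx.
by rewrite expr0n mulr0 ltxx.
Qed.

Lemma sin_angle_sub_pi3 (V P Q : C) : 0 < sarea2 V P Q ->
  sin (angle_at V P Q - pi / 3) =
    (sarea2 V P Q - sqrt3 * dotc (P - V) (Q - V)) / (2 * (cnorm (P - V) * cnorm (Q - V))).
Proof.
move=> S_gt0; have [nu_gt0 nw_gt0] := cnorm_gt0_of_sarea S_gt0.
have := lagrange_identity (P - V) (Q - V); rewrite /angle_at -/(sarea2 V P Q).
move: (sarea2 V P Q) (dotc _ _) (cnorm (P - V)) (cnorm (Q - V)) S_gt0 nu_gt0 nw_gt0.
move=> S d nu nw S_gt0 nu_gt0 nw_gt0 lag.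
have nz_n : nu * nw != 0 by rewrite mulf_neq0 ?gt_eqF.
set x := d / (nu * nw).
have sinE : 1 - x ^+ 2 = (S / (nu * nw)) ^+ 2.
  have n2E : (nu * nw) ^+ 2 = d ^+ 2 + S ^+ 2 by rewrite exprMn lag.
  by rewrite /x !expr_div_n n2E; field; rewrite -n2E expf_neq0.
have x_bound : -1 <= x <= 1.
  have : x ^+ 2 <= 1 by have := sqr_ge0 (S / (nu * nw)); rewrite -sinE; lra.
  by move=> ?; apply/andP; split; nra.
rewrite sinB sin_acos // acosK ?in_itv //= cos_pi3 sin_pi3 sinE sqrtr_sqr ger0_norm.
  by rewrite /x; field; rewrite !gt_eqF.
by rewrite divr_ge0 ?ltW // mulr_gt0.
Qed.

Lemma is_bary_scale (P A B C : C) x y w l : l != 0 ->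
  is_bary P (x * l) (y * l) (w * l) A B C -> is_bary P x y w A B C.
Proof.
move=> nz_l [nz_sum E]; split.
  by apply: contraNneq nz_sum; rewrite -!mulrDl => ->; rewrite mul0r.
have nz_lC : rC l != 0 by apply: contraNneq nz_l => /(congr1 (@complex.Re R)) /= ->.
apply: (mulIf nz_lC); move: E; rewrite -!mulrDl !rC_mul => E.
by rewrite -mulrA E; ring.
Qed.

Lemma isX16_of_bary (P A B C : C) : 0 < sarea2 A B C ->
  let S := sarea2 A B C in
  is_bary P (cnorm (B - C) ^+ 2 * (S - sqrt3 * dotc (B - A) (C - A)))
            (cnorm (C - A) ^+ 2 * (S - sqrt3 * dotc (C - B) (A - B)))
            (cnorm (A - B) ^+ 2 * (S - sqrt3 * dotc (A - C) (B - C))) A B C ->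
  isX16 P A B C.
Proof.
move=> S_gt0 S.
have S_B : 0 < sarea2 B C A by rewrite sarea2_cycle.
have S_C : 0 < sarea2 C A B by rewrite 2!sarea2_cycle.
have [c_gt0 b_gt0] := cnorm_gt0_of_sarea S_gt0.
have [a_gt0 _] := cnorm_gt0_of_sarea S_B.
rewrite /isX16 !sin_angle_sub_pi3 // (sarea2_cycle A B C) -(sarea2_cycle C A B) -/S.
rewrite (cnorm_distC B A) (cnorm_distC C B) (cnorm_distC A C) in c_gt0 a_gt0 *.
move: (cnorm (B - C)) (cnorm (C - A)) (cnorm (A - B)) a_gt0 b_gt0 c_gt0 => a b c a_gt0 b_gt0 c_gt0.
have nz_l : 2 * (a * b * c) != 0 by rewrite !mulf_neq0 ?gt_eqF.
move=> bary; apply: (is_bary_scale nz_l); move: bary; congr is_bary; field;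
  by rewrite !gt_eqF.
Qed.

Lemma cot_brocard (A B C : C) : 0 < sarea2 A B C ->
  cot (brocard A B C) =
    (cnorm (B - C) ^+ 2 + cnorm (C - A) ^+ 2 + cnorm (A - B) ^+ 2) / (2 * sarea2 A B C).
Proof.
move=> S_gt0; have [c_gt0 _] := cnorm_gt0_of_sarea S_gt0.
have sum_gt0 : 0 < cnorm (B - C) ^+ 2 + cnorm (C - A) ^+ 2 + cnorm (A - B) ^+ 2.
  have : 0 < cnorm (A - B) ^+ 2 by rewrite cnorm_distC exprn_gt0.
  by have := sqr_ge0 (cnorm (B - C)); have := sqr_ge0 (cnorm (C - A)); lra.
by rewrite /brocard cot_atan ?invf_div // divr_gt0 ?mulr_gt0.
Qed.

(** * The reference triangle *)

Lemma reference_triangle phi g al be : (forall p, model_fits_at phi g al be p) ->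
  [/\ refA phi = g + al, refB phi = g + al * (1 + z) + be * z & refC phi = g + al * z].
Proof.
move=> fits.
have l10 : latC R (1, 0) = 1 by rewrite latCE /= mul0r addr0.
have l01 : latC R (0, 1) = z by rewrite latCE /= mul1r add0r.
have eA : refA phi = edge_model g al be (0, 0) (1, 0) := fits (0, 0) (ord6 0).
have eB : refB phi = edge_model g al be (1, 0) (0, 1) := fits (1, 0) (ord6 2).
have eC : refC phi = edge_model g al be (0, 1) (0, 0) := fits (0, 1) (ord6 4).
by rewrite eA eB eC /edge_model latC0 l10 l01; split; ring.
Qed.

Section ReferenceTriangle.
Variables g al be : C.
Let A := g + al.
Let B := g + al * (1 + z) + be * z.
Let C' := g + al * z.

Lemma model_coef_neq0 :
  ~ (cnorm (B - C') = cnorm (C' - A) /\ cnorm (C' - A) = cnorm (A - B)) -> be != 0.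
Proof.
move=> not_equilateral; apply/eqP => be0; apply: not_equilateral.
rewrite /A /B /C' be0 /cnorm; case: (g) (al) => [g1 g2] [a1 a2].
by rewrite /cre /cim /zeta /=; split; congr Num.sqrt; field: sqrt3_sqr.
Qed.

Lemma sqr_sides_sub_area :
  cnorm (B - C') ^+ 2 + cnorm (C' - A) ^+ 2 + cnorm (A - B) ^+ 2 - 2 * sqrt3 * sarea2 A B C'
  = 2 * cnorm be ^+ 2.
Proof.
rewrite !cnorm_sqr /A /B /C' /sarea2 /cre /cim /zeta.
by case: (g) (al) (be) => [g1 g2] [a1 a2] [b1 b2] /=; field: sqrt3_sqr.
Qed.

Hypothesis nz_be : be != 0.
Let G := g - al ^+ 2 / be.
Local Notation focus j := (model_focus g al be (z ^+ j)).

Lemma foci_dist_sqr :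
  [/\ cnorm (focus 0 - focus 2) ^+ 2 = 3 / 16 * cnorm be ^+ 2,
      cnorm (focus 2 - focus 1) ^+ 2 = 3 / 16 * cnorm be ^+ 2 &
      cnorm (focus 1 - focus 0) ^+ 2 = 3 / 16 * cnorm be ^+ 2].
Proof.
have diff j1 j2 : focus j1 - focus j2 = be * ((z ^+ j2) ^+ 2 - (z ^+ j1) ^+ 2) / 4.
  by rewrite /model_focus; ring.
rewrite !diff expr0 expr1n -(exprM z 2 2) zeta4 expr1 zeta_sqr !cnorm_sqr.
by case: (be) => b1 b2; rewrite /zeta /cre /cim /=; split; field: sqrt3_sqr.
Qed.

Lemma foci_centroid : (focus 0 + focus 2 + focus 1) / rC 3 = G.
Proof.
rewrite /model_focus expr0 expr1n -(exprM z 2 2) zeta4 expr1 zeta_sqr /rC complexr0 rmorph_nat.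
by rewrite /G; field.
Qed.

Lemma isX16_foci_centre : 0 < sarea2 A B C' -> isX16 G A B C'.
Proof.
move=> S_gt0; apply: isX16_of_bary => //.
set S := sarea2 A B C'.
set X := cnorm (B - C') ^+ 2 * _; set Y := cnorm (C' - A) ^+ 2 * _.
set W := cnorm (A - B) ^+ 2 * _.
have sumE : X + Y + W = 2 * S * cnorm be ^+ 2.
  rewrite /X /Y /W /S !cnorm_sqr /A /B /C' /sarea2 /dotc /cre /cim /zeta.
  by case: (g) (al) (be) => [g1 g2] [a1 a2] [b1 b2] /=; field: sqrt3_sqr.
have be2_gt0 := cnorm_sqr_gt0 nz_be.
split; first by rewrite sumE lt0r_neq0 // mulr_gt0 // mulr_gt0.
apply: (mulfI nz_be); rewrite mulrA (_ : be * G = be * g - al ^+ 2); last by rewrite /G; field.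
rewrite /X /Y /W /S !cnorm_sqr /A /B /C' /sarea2 /dotc /cre /cim /zeta /rC.
case: (g) (al) (be) => [g1 g2] [a1 a2] [b1 b2] /=.
by apply: complex_ext => /=; field: sqrt3_sqr.
Qed.

Lemma focusA_bary : 0 < sarea2 A B C' ->
  let a := cnorm (B - C') in let b := cnorm (C' - A) in let c := cnorm (A - B) in
  let S := sarea2 A B C' in
  is_bary (focus 0)
    (sqrt3 * (7 * a ^+ 2 * b ^+ 2 + 7 * a ^+ 2 * c ^+ 2 + 2 * b ^+ 2 * c ^+ 2
              - 4 * a ^+ 4 - b ^+ 4 - c ^+ 4)
     - 2 * S * (8 * a ^+ 2 + b ^+ 2 + c ^+ 2))
    (sqrt3 * (2 * a ^+ 2 * b ^+ 2 - a ^+ 2 * c ^+ 2 + 3 * b ^+ 2 * c ^+ 2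
              - 4 * b ^+ 4 + c ^+ 4)
     + 2 * S * (2 * a ^+ 2 - 2 * b ^+ 2 - c ^+ 2))
    (- (sqrt3 * (a ^+ 2 * b ^+ 2 - 2 * a ^+ 2 * c ^+ 2 - 3 * b ^+ 2 * c ^+ 2
                 - b ^+ 4 + 4 * c ^+ 4))
     + 2 * S * (2 * a ^+ 2 - b ^+ 2 - 2 * c ^+ 2))
    A B C'.
Proof.
move=> S_gt0 a b c S; set X := _ - _; set Y := _ + _; set W := - _ + _.
have sumE : X + Y + W = - 16 * S * cnorm be ^+ 2.
  rewrite /X /Y /W /a /b /c /S !cnorm_pow4 !cnorm_sqr /A /B /C' /sarea2 /cre /cim /zeta.
  by case: (g) (al) (be) => [g1 g2] [a1 a2] [b1 b2] /=; field: sqrt3_sqr.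
have be2_gt0 := cnorm_sqr_gt0 nz_be.
split; first by rewrite sumE mulNr mulNr oppr_eq0 lt0r_neq0 // mulr_gt0 // mulr_gt0.
apply: (mulfI nz_be); rewrite mulrA.
rewrite (_ : be * focus 0 = be * g - al ^+ 2 - be ^+ 2 / 4); last by rewrite /model_focus /G; field.
rewrite /X /Y /W /a /b /c /S !cnorm_pow4 !cnorm_sqr /A /B /C' /sarea2 /cre /cim /zeta /rC.
case: (g) (al) (be) => [g1 g2] [a1 a2] [b1 b2] /=.
by apply: complex_ext => /=; field: sqrt3_sqr.
Qed.

End ReferenceTriangle.

End HexagonalGrid.

Theorem mainTheorem14 (R : realType) (phi : lat -> lat -> R[i]) (fa fb fc : R[i]) :
  hex_grid phi ->
  let A := refA phi in let B := refB phi in let C := refC phi in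
  let a := cnorm (B - C) in let b := cnorm (C - A) in let c := cnorm (A - B) in
  let S := sarea2 A B C in
  let r3 := Num.sqrt (3 : R) in
  0 < S ->
  ~ (a = b /\ b = c) ->
  (forall p, on_parabola_with_focus fa (chain_vertex phi p dirA)) ->
  (forall p, on_parabola_with_focus fb (chain_vertex phi p dirB)) ->
  (forall p, on_parabola_with_focus fc (chain_vertex phi p dirC)) ->
  let s := cnorm (fa - fb) in
  (fa != fb /\ cnorm (fa - fb) = cnorm (fb - fc) /\ cnorm (fb - fc) = cnorm (fc - fa)
   /\ isX16 ((fa + fb + fc) / rC 3) A B C) /\
  is_bary fa
    (r3 * (7 * a ^+ 2 * b ^+ 2 + 7 * a ^+ 2 * c ^+ 2 + 2 * b ^+ 2 * c ^+ 2
           - 4 * a ^+ 4 - b ^+ 4 - c ^+ 4)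
     - 2 * S * (8 * a ^+ 2 + b ^+ 2 + c ^+ 2))
    (r3 * (2 * a ^+ 2 * b ^+ 2 - a ^+ 2 * c ^+ 2 + 3 * b ^+ 2 * c ^+ 2
           - 4 * b ^+ 4 + c ^+ 4)
     + 2 * S * (2 * a ^+ 2 - 2 * b ^+ 2 - c ^+ 2))
    (- (r3 * (a ^+ 2 * b ^+ 2 - 2 * a ^+ 2 * c ^+ 2 - 3 * b ^+ 2 * c ^+ 2
              - b ^+ 4 + 4 * c ^+ 4))
     + 2 * S * (2 * a ^+ 2 - b ^+ 2 - 2 * c ^+ 2))
    A B C /\
  s ^+ 2 = 3 / 32 * (a ^+ 2 + b ^+ 2 + c ^+ 2 - 2 * r3 * S) /\
  s ^+ 2 = 3 / 16 * (cot (brocard A B C) - r3) * S.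
Proof.
move=> grid.
have [g [al [be fits]]] := hex_grid_model grid.
have [-> -> ->] := reference_triangle fits.
move=> A B C a b c S r3 S_gt0 not_equilateral onA onB onC.
have nz_be := model_coef_neq0 not_equilateral.
rewrite (chain_focus (j := ord6 0) nz_be fits (onA (0, 0))).
rewrite (chain_focus (j := ord6 2) nz_be fits (onB (0, 0))).
rewrite (chain_focus (j := ord6 1) nz_be fits (onC (0, 0))) => s /=.
have [sAB sBC sCA] := foci_dist_sqr g al be.
have sides := sqr_sides_sub_area g al be; rewrite -/A -/B -/C -/a -/b -/c -/S -/r3 in sides.
have be2_gt0 := cnorm_sqr_gt0 nz_be.
split; [split; [|split; [|split]] | split; [|split]].
- apply/eqP => same; move: sAB; rewrite same subrr cnorm0 expr0n /=; lra.
- by apply: eq_cnorm; rewrite sAB sBC.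
- by apply: eq_cnorm; rewrite sBC sCA.
- by rewrite foci_centroid //; exact: (isX16_foci_centre nz_be S_gt0).
- exact: focusA_bary.
- by rewrite /s /= sAB sides; field.
- rewrite /s /= sAB cot_brocard // -/a -/b -/c -/S.
  have -> : a ^+ 2 + b ^+ 2 + c ^+ 2 = 2 * cnorm be ^+ 2 + 2 * r3 * S by rewrite -sides; ring.
  by field; rewrite gt_eqF.
Qed.
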